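(* Let $V$ be a vector space over $\mathbb{F}_q$ with $q$ odd and a perfect square, and let $s_1,\dots,s_5$ be transvections in $\mathrm{SL}(V)$ such that $(s_1,s_2)$ and $(s_2,s_3)$ are two-way directed edges and $[s_3,s_4]$, $[s_4,s_5]$, $[s_5,s_3]$ are directed edges of $\Gamma(\mathcal T)$. Assume that $(s_1,s_3)$ is not a two-way directed edge. If $[s_1,s_3]$ is a one-way edge, then the triangle $(s_1,s_3,s_2)$ is non-unitary. If $[s_3,s_1]$ is a one-way edge, then the triangle $(s_1,s_2,s_3)$ is non-unitary. If neither $[s_1,s_3]$ nor $[s_3,s_1]$ is an edge, then $(s_1,s_3^{s_2})$ is a two-way directed edge and $[s_3^{s_2},s_4^{s_2}]$, $[s_4^{s_2},s_5^{s_2}]$, $[s_5^{s_2},s_3^{s_2}]$ are directed edges.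
   Context: Transvections $s=1+u_s\otimes\phi_s$, i.e. $x\mapsto x+\phi_s(x)u_s$ with $\phi_s(u_s)=0$; $\mathcal T$ is the set of all transvections of $\mathrm{SL}(V)$. $\Gamma(\mathcal T)$: directed graph with an edge $[s,t]$ iff $\phi_t(u_s)\ne0$; it is two-way if $[t,s]$ is also an edge, one-way otherwise. $s^g=g^{-1}sg$. Weight $w(r_1,\dots,r_k)=\prod_{i=1}^k\phi_{r_{i+1}}(u_{r_i})$ (indices mod $k$); the tuple is unitary if $w(r_1,\dots,r_k)+(-1)^{k+1}w(r_k,\dots,r_1)^{\sqrt q}=0$, non-unitary otherwise. *)

From HB Require Import structures.
From mathcomp Require Import all_boot all_order all_algebra.
Set Implicit Arguments. Unset Strict Implicit. Unset Printing Implicit Defensive.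
Import GRing.Theory.
Local Open Scope ring_scope.

(* V = 'rV[F]_n (row vectors), linear maps act on the right: x |-> x *m g.
   A transvection s = 1 + u_s (x) phi_s is given by its data
   (u_s, phi_s) : 'rV_n * 'cV_n, with phi_s(x) = x *m phi_s. *)
Definition tdata (F : fieldType) (n : nat) := ('rV[F]_n * 'cV[F]_n)%type.

Definition tu (F : fieldType) (n : nat) (s : tdata F n) : 'rV[F]_n := s.1.
Definition tphi (F : fieldType) (n : nat) (s : tdata F n) : 'cV[F]_n := s.2.

Definition app (F : fieldType) (n : nat) (phi : 'cV[F]_n) (x : 'rV[F]_n) : F := (x *m phi) 0 0.

Definition is_transvection (F : fieldType) (n : nat) (s : tdata F n) : bool :=
  [&& tu s != 0, tphi s != 0 & app (tphi s) (tu s) == 0].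

Definition tmx (F : fieldType) (n : nat) (s : tdata F n) : 'M[F]_n := 1%:M + tphi s *m tu s.

(* data of the conjugate s^g = g^-1 s g : u_{s^g} = u_s g,
   phi_{s^g} = phi_s o g^-1 ; indeed tmx (tconj s g) = invmx g *m tmx s *m g *)
Definition tconj (F : fieldType) (n : nat) (s : tdata F n) (g : 'M[F]_n) : tdata F n :=
  (tu s *m g, invmx g *m tphi s).

Definition edge (F : fieldType) (n : nat) (s t : tdata F n) : bool := app (tphi t) (tu s) != 0.

Definition two_way (F : fieldType) (n : nat) (s t : tdata F n) : bool := edge s t && edge t s.
Definition one_way (F : fieldType) (n : nat) (s t : tdata F n) : bool := edge s t && ~~ edge t s.

Definition weight (F : fieldType) (n : nat) (rs : seq (tdata F n)) : F :=
  let k := size rs in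
  \prod_(i < k) app (tphi (nth (0, 0) rs ((i.+1) %% k))) (tu (nth (0, 0) rs i)).

(* unitary w.r.t. sq (= sqrt q) *)
Definition unitary (F : fieldType) (n : nat) (sq : nat) (rs : seq (tdata F n)) : bool :=
  weight rs + (-1) ^+ (size rs).+1 * (weight (rev rs)) ^+ sq == 0.

(* Conjugating both ends by an invertible matrix preserves phi_t(u_s), so the
   edges among s3, s4, s5 survive conjugation by s2.  Against the unconjugated
   s1, the inverse 1 - phi_2 u_2 of the matrix of s2 gives
     phi_{s3^s2}(u_1) = phi_3(u_1) - phi_2(u_1) phi_3(u_2),
     phi_1(u_{s3^s2}) = phi_1(u_3) + phi_2(u_3) phi_1(u_2),
   and when phi_3(u_1) = phi_1(u_3) = 0 both are, up to sign, products of edge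
   weights of the two-way pairs (s1,s2), (s2,s3).  In the one-way cases the
   reversed triangle runs through the missing edge, so its weight is 0 while
   the forward weight is not, and the unitarity identity fails. *)
From HB Require Import structures.
From mathcomp Require Import all_boot all_order all_algebra.
Import GRing.Theory.
Local Open Scope ring_scope.
Set Implicit Arguments.
Unset Strict Implicit.

Section Transvections.

Variables (F : fieldType) (n : nat).
Implicit Types (x y : 'rV[F]_n) (phi : 'cV[F]_n) (s t : tdata F n).

Lemma appD phi x y : app phi (x + y) = app phi x + app phi y.
Proof. by rewrite /app mulmxDl mxE. Qed.

Lemma appN phi x : app phi (- x) = - app phi x.
Proof. by rewrite /app mulNmx mxE. Qed.

Lemma appZ phi a x : app phi (a *: x) = a * app phi x.
Proof. by rewrite /app -scalemxAl mxE. Qed.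

Lemma app_mulmx (M : 'M[F]_n) phi x : app (M *m phi) x = app phi (x *m M).
Proof. by rewrite /app mulmxA. Qed.

Lemma mulmx_rank1 x phi y : x *m (phi *m y) = app phi x *: y.
Proof. by rewrite mulmxA [x *m phi]mx11_scalar mul_scalar_mx. Qed.

Lemma mulmx_tmx x s : x *m tmx s = x + app (tphi s) x *: tu s.
Proof. by rewrite /tmx mulmxDr mulmx1 mulmx_rank1. Qed.

Lemma tmx_mulV s :
  is_transvection s -> tmx s *m (1%:M - tphi s *m tu s) = 1%:M.
Proof.
case/and3P=> _ _ /eqP phi_u.
have sq0 : (tphi s *m tu s) *m (tphi s *m tu s) = 0.
  by rewrite -mulmxA mulmx_rank1 phi_u scale0r mulmx0.
by rewrite /tmx mulmxDl mul1mx mulmxBr mulmx1 sq0 subr0 subrK.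
Qed.

Lemma tmx_unit s : is_transvection s -> tmx s \in unitmx.
Proof. by move/tmx_mulV/mulmx1_unit=> []. Qed.

Lemma invmx_tmx s : is_transvection s -> invmx (tmx s) = 1%:M - tphi s *m tu s.
Proof.
move=> hs; rewrite -[RHS](mulKmx (tmx_unit hs)).
by rewrite tmx_mulV // mulmx1.
Qed.

Lemma edge_tconj s t (g : 'M[F]_n) :
  g \in unitmx -> edge (tconj s g) (tconj t g) = edge s t.
Proof. by move=> g_unit; rewrite /edge /tconj /= app_mulmx mulmxK. Qed.

Lemma app_tconj_phi r s t : is_transvection s ->
  app (tphi (tconj t (tmx s))) (tu r)
  = app (tphi t) (tu r) - app (tphi s) (tu r) * app (tphi t) (tu s).
Proof.
move=> hs; rewrite /tconj /= app_mulmx invmx_tmx // mulmxBr mulmx1.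
by rewrite mulmx_rank1 appD appN appZ.
Qed.

Lemma app_tconj_u r s t :
  app (tphi r) (tu (tconj t (tmx s)))
  = app (tphi r) (tu t) + app (tphi s) (tu t) * app (tphi r) (tu s).
Proof. by rewrite /tconj /= mulmx_tmx appD appZ. Qed.

Lemma weight3 (a b c : tdata F n) :
  weight [:: a; b; c]
  = app (tphi b) (tu a) * app (tphi c) (tu b) * app (tphi a) (tu c).
Proof. by rewrite /weight /= !big_ord_recr big_ord0 /= mul1r. Qed.

Lemma weight3_eq0 (a b c : tdata F n) :
  (weight [:: a; b; c] == 0) = [|| ~~ edge a b, ~~ edge b c | ~~ edge c a].
Proof. by rewrite weight3 !mulf_eq0 /edge !negbK orbA. Qed.

Lemma nonunitary_rev_weight0 (sq : nat) (rs : seq (tdata F n)) :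
  (0 < sq)%N -> weight rs != 0 -> weight (rev rs) = 0 -> ~~ unitary sq rs.
Proof.
by move=> sq_gt0 w_neq0 wrev0; rewrite /unitary wrev0 expr0n gtn_eqF // mulr0 addr0.
Qed.

End Transvections.

Lemma root_card_gt0 (T : finType) (x : T) (r : nat) : #|T| = (r ^ 2)%N -> (0 < r)%N.
Proof.
move=> cardT; have : (0 < #|T|)%N by apply/card_gt0P; exists x.
by rewrite cardT expn_gt0 orbF.
Qed.

Unset Implicit Arguments.

Theorem lemma4p10 (F : finFieldType) (r : nat) (n : nat)
  (hodd : odd #|F|) (hsq : #|F| = (r ^ 2)%N)
  (s1 s2 s3 s4 s5 : tdata F n)
  (h1 : is_transvection s1) (h2 : is_transvection s2) (h3 : is_transvection s3)
  (h4 : is_transvection s4) (h5 : is_transvection s5)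
  (e12 : two_way s1 s2) (e23 : two_way s2 s3)
  (e34 : edge s3 s4) (e45 : edge s4 s5) (e53 : edge s5 s3)
  (n13 : ~~ two_way s1 s3) :
  (one_way s1 s3 -> ~~ unitary r [:: s1; s3; s2]) /\
  (one_way s3 s1 -> ~~ unitary r [:: s1; s2; s3]) /\
  (~~ edge s1 s3 -> ~~ edge s3 s1 ->
     let g := tmx s2 in
     [/\ two_way s1 (tconj s3 g),
         edge (tconj s3 g) (tconj s4 g),
         edge (tconj s4 g) (tconj s5 g) &
         edge (tconj s5 g) (tconj s3 g)]).
Proof.
have r_gt0 := root_card_gt0 0 hsq.
case/andP: e12 => e12 e21; case/andP: e23 => e23 e32.
split; [|split].
- case/andP=> e13 not31; apply: nonunitary_rev_weight0 => //.
    by rewrite weight3_eq0 e13 e32 e21.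
  by apply/eqP; rewrite /rev /= weight3_eq0 not31 !orbT.
- case/andP=> e31 not13; apply: nonunitary_rev_weight0 => //.
    by rewrite weight3_eq0 e12 e23 e31.
  by apply/eqP; rewrite /rev /= weight3_eq0 not13 !orbT.
move=> /negbNE/eqP phi3u1 /negbNE/eqP phi1u3 g.
rewrite /two_way !edge_tconj ?tmx_unit // e34 e45 e53 /edge.
rewrite app_tconj_phi // app_tconj_u phi3u1 phi1u3 sub0r oppr_eq0 add0r.
by rewrite !mulf_neq0.
Qed.
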